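(* For every vertex $v$ of $K$ and every $n\in\mathbb N$, $$B(\omega(v),2n-2,\omega(K))\subset \omega(B(v,n,K))\subset B(\omega(v),2n+2,\omega(K)).$$
   Context: $K$ is the pentagonal combinatorial tiling: a 2-dimensional CW-complex homeomorphic to the open disk, obtained as follows. The subdivision rule $\omega$ acts on a pentagon with boundary vertices $v_1,\dots,v_5$ in cyclic order (indices mod 5): add a vertex $m_i$ inside each edge $v_iv_{i+1}$, interior vertices $c_1,\dots,c_5$, edges $c_ic_{i+1}$ and $c_im_i$, and replace the face by the central pentagon $c_1\cdots c_5$ and petals $v_i\,m_i\,c_i\,c_{i-1}\,m_{i-1}$. $K_0$ is one pentagon, $K_n=\omega^n(K_0)$, $K_n$ embeds onto the central superpentagon $\omega^n(\text{central face of }\omega(K_0))$ of $K_{n+1}$, and $K$ is the direct limit. $\omega(K)$ is the complex on the same space obtained by applying $\omega$ to every face of $K$; for a subcomplex $P$, $\omega(P)$ is the union of the subdivisions of its faces, a subcomplex of $\omega(K)$; a vertex $v$ of $K$ is also a vertex $\omega(v)$ of $\omega(K)$. For a complex $L$, $B(v,n,L)$ is the subcomplex consisting of the faces all of whose vertices are at edge-path distance at most $n$ from $v$, with their edges and vertices. *)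

From mathcomp Require Import all_boot.
From Stdlib Require Import Relations.Relation_Definitions Relations.Relation_Operators.

(* Pentagonal 2-complexes.  Vertices, edges and faces are types; every  *)
(* edge has two ends; every face is a pentagon with boundary vertices    *)
(* bd f 0 .. bd f 4 (cyclic order) and boundary edges fe f i joining     *)
(* bd f i and bd f (i+1); fo f i tells whether fe f i is traversed in    *)
(* the direction of its ends (true) or backwards (false).                *)
Record cplx := Cplx {
  cV : Type; cE : Type; cF : Type;
  ends : cE -> cV * cV;
  bd : cF -> 'I_5 -> cV;
  fe : cF -> 'I_5 -> cE;
  fo : cF -> 'I_5 -> bool }.
Arguments ends {c}. Arguments bd {c}. Arguments fe {c}. Arguments fo {c}.

Definition nxt (i : 'I_5) : 'I_5 := ordS i.
Definition prv (i : 'I_5) : 'I_5 := ord_pred i.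

(* new faces: central pentagon (f,None), petal (f,Some i) =             *)
(*            v_i m_i c_i c_{i-1} m_{i-1}  (m_i = midpoint of fe f i)   *)
Section Omega.
Variable L : cplx.

Definition oV := ((cV L + cE L) + (cF L * 'I_5))%type.
Definition old (v : cV L) : oV := inl (inl v).
Definition mid (e : cE L) : oV := inl (inr e).
Definition cen (f : cF L) (i : 'I_5) : oV := inr (f, i).

Definition oE := (((cE L * bool) + (cF L * 'I_5)) + (cF L * 'I_5))%type.
(* half e false = [ends.1, m(e)],  half e true = [m(e), ends.2] *)
Definition half (e : cE L) (b : bool) : oE := inl (inl (e, b)).
Definition ring (f : cF L) (i : 'I_5) : oE := inl (inr (f, i)).
Definition spoke (f : cF L) (i : 'I_5) : oE := inr (f, i).

Definition oF := (cF L * option 'I_5)%type.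

Definition o_ends (x : oE) : oV * oV :=
  match x with
  | inl (inl (e, false)) => (old (ends e).1, mid e)
  | inl (inl (e, true)) => (mid e, old (ends e).2)
  | inl (inr (f, i)) => (cen f i, cen f (nxt i))
  | inr (f, i) => (cen f i, mid (fe f i))
  end.

Definition o_bd (g : oF) (j : 'I_5) : oV :=
  let: (f, o) := g in
  match o with
  | None => cen f j
  | Some i =>
      match val j with
      | 0 => old (bd f i)
      | 1 => mid (fe f i)
      | 2 => cen f i
      | 3 => cen f (prv i)
      | _ => mid (fe f (prv i))
      end
  end.

Definition o_fe (g : oF) (j : 'I_5) : oE :=
  let: (f, o) := g in
  match o with
  | None => ring f j
  | Some i =>
      match val j with
      | 0 => half (fe f i) (~~ fo f i)
      | 1 => spoke f i
      | 2 => ring f (prv i)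
      | 3 => spoke f (prv i)
      | _ => half (fe f (prv i)) (fo f (prv i))
      end
  end.

Definition o_fo (g : oF) (j : 'I_5) : bool :=
  let: (f, o) := g in
  match o with
  | None => true
  | Some i =>
      match val j with
      | 0 => fo f i
      | 1 => false
      | 2 => false
      | 3 => true
      | _ => fo f (prv i)
      end
  end.

Definition omega : cplx := Cplx oV oE oF o_ends o_bd o_fe o_fo.
End Omega.

Record morph (L L' : cplx) := Morph {
  mV : cV L -> cV L'; mE : cE L -> cE L'; mF : cF L -> cF L' }.
Arguments mV {L L'}. Arguments mE {L L'}. Arguments mF {L L'}.

Definition omega_morph (L L' : cplx) (p : morph L L') : morph (omega L) (omega L') :=
  Morph (omega L) (omega L')
    (fun x : oV L => match x with
       | inl (inl v) => old L' (mV p v)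
       | inl (inr e) => mid L' (mE p e)
       | inr (f, i) => cen L' (mF p f) i end)
    (fun x : oE L => match x with
       | inl (inl (e, b)) => half L' (mE p e) b
       | inl (inr (f, i)) => ring L' (mF p f) i
       | inr (f, i) => spoke L' (mF p f) i end)
    (fun g : oF L => (mF p g.1, g.2)).

Definition K0 : cplx :=
  Cplx 'I_5 'I_5 unit (fun i => (i, nxt i)) (fun _ i => i) (fun _ i => i) (fun _ _ => true).

Fixpoint Kn (n : nat) : cplx := match n with 0 => K0 | S m => omega (Kn m) end.

Definition iota0 : morph K0 (omega K0) :=
  Morph K0 (omega K0) (fun i => cen K0 tt i) (fun i => ring K0 tt i) (fun _ => (tt, None)).

(* iota n : K_n onto the central superpentagon omega^n(central face) of K_{n+1} *)
Fixpoint iota (n : nat) : morph (Kn n) (Kn n.+1) :=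
  match n return morph (Kn n) (Kn n.+1) with
  | 0 => iota0
  | S m => @omega_morph (Kn m) (Kn m.+1) (iota m)
  end.

(* Direct limits, as complexes whose cells are considered up to the     *)
(* identifications x ~ phi_n x (setoid presentation).                   *)
Record scplx := SCplx {
  sV : Type; sE : Type; sF : Type;
  sends : sE -> sV * sV;
  sbd : sF -> 'I_5 -> sV;
  sfe : sF -> 'I_5 -> sE;
  eqV : relation sV; eqE : relation sE; eqF : relation sF }.
Arguments sends {s}. Arguments sbd {s}. Arguments sfe {s}.
Arguments eqV {s}. Arguments eqE {s}. Arguments eqF {s}.

Section Limit.
Variable L : nat -> cplx.
Variable phi : forall n, morph (L n) (L n.+1).

Definition LV := {n : nat & cV (L n)}.
Definition LE := {n : nat & cE (L n)}.
Definition LF := {n : nat & cF (L n)}.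

Definition stepV : relation LV := fun p q =>
  exists n x, p = existT _ n x /\ q = existT _ n.+1 (mV (phi n) x).
Definition stepE : relation LE := fun p q =>
  exists n x, p = existT _ n x /\ q = existT _ n.+1 (mE (phi n) x).
Definition stepF : relation LF := fun p q =>
  exists n x, p = existT _ n x /\ q = existT _ n.+1 (mF (phi n) x).

Definition limit : scplx :=
  SCplx LV LE LF
    (fun e => (existT _ (projT1 e) (ends (projT2 e)).1,
               existT _ (projT1 e) (ends (projT2 e)).2))
    (fun f i => existT _ (projT1 f) (bd (projT2 f) i))
    (fun f i => existT _ (projT1 f) (fe (projT2 f) i))
    (clos_refl_sym_trans _ stepV)
    (clos_refl_sym_trans _ stepE)
    (clos_refl_sym_trans _ stepF).
End Limit.

Definition K : scplx := limit Kn iota.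

Definition omegaK : scplx := limit (fun n => omega (Kn n)) (fun n => @omega_morph (Kn n) (Kn n.+1) (iota n)).

Definition omega_v (v : sV K) : sV omegaK :=
  existT (fun n => cV (omega (Kn n))) (projT1 v) (old (Kn (projT1 v)) (projT2 v)).

(* omega(P) for a subcomplex of K given by its set of faces P: the faces
   of omega(K) obtained by subdividing faces of P *)
Definition omega_faces (P : sF K -> Prop) : sF omegaK -> Prop :=
  fun g => P (existT (fun n => cF (Kn n)) (projT1 g) (projT2 g).1).

Section Metric.
Variable L : scplx.

Definition adj (x y : sV L) : Prop :=
  exists e : sE L,
    (eqV x (sends e).1 /\ eqV y (sends e).2) \/ (eqV x (sends e).2 /\ eqV y (sends e).1).

Fixpoint walk (x : sV L) (p : seq (sV L)) : Prop :=
  match p with [::] => True | y :: q => adj x y /\ walk y q end.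

Definition dist_le (x y : sV L) (r : nat) : Prop :=
  exists p : seq (sV L), size p <= r /\ walk x p /\ eqV (last x p) y.

Definition ball (v : sV L) (r : nat) : sF L -> Prop :=
  fun f => forall i : 'I_5, dist_le v (sbd f i) r.

Record subcplx := Sub { subV : sV L -> Prop; subE : sE L -> Prop; subF : sF L -> Prop }.

Definition gen (P : sF L -> Prop) : subcplx :=
  Sub (fun x => exists f i, P f /\ eqV x (sbd f i))
      (fun e => exists f i, P f /\ eqE e (sfe f i))
      (fun f => exists f', P f' /\ eqF f f').

Definition sub_incl (A B : subcplx) : Prop :=
  (forall x, subV A x -> subV B x) /\
  (forall e, subE A e -> subE B e) /\
  (forall f, subF A f -> subF B f).
End Metric.
Arguments ball {L}. Arguments gen {L}. Arguments sub_incl {L}.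

From Pilot Require Import Defs.
From Stdlib Require Import Relations.Relation_Definitions Relations.Relation_Operators.
From Stdlib Require Import Relations.Operators_Properties Lia.
From mathcomp Require Import all_boot zify.

(* Outer inclusion: a K-path of length r lifts to an omega(K)-path of length 2r through the
   midpoints of its edges, and every corner of a subdivided face lies within two edges of an
   old corner of that face.
   Inner inclusion: [reach k x] is a necessary condition, in terms of K-distances from v, for
   a vertex x of omega(K) to be within k of omega(v): x is an old vertex w with
   2 d(v,w) <= k, the midpoint of an edge with an end w such that 2 d(v,w) + 1 <= k, or a
   centre c_i of a face f with a corner v_j such that 2 d(v,v_j) + [cost i j] <= k.  It holds
   with k = 0 at omega(v), is invariant under the identifications of the direct limit, and
   passes from k to k+1 along every edge of omega(K).  Every face of omega(K) has a centre
   c_i among its corners; [reach (2n-2)] at c_i and [cost >= 2] put a corner of f within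
   distance n-2 of v, hence all its corners within n. *)

Section EdgePaths.
Context {L : scplx}.
Hypothesis eqV_equiv : equivalence _ (@eqV L).

Let eqV_refl (x : sV L) : eqV x x := Relation_Definitions.equiv_refl _ _ eqV_equiv x.
Let eqV_sym (x y : sV L) : eqV x y -> eqV y x := Relation_Definitions.equiv_sym _ _ eqV_equiv x y.
Let eqV_trans (x y z : sV L) : eqV x y -> eqV y z -> eqV x z :=
  Relation_Definitions.equiv_trans _ _ eqV_equiv x y z.

Lemma adj_sym {x y : sV L} : adj L x y -> adj L y x.
Proof. by case=> e [[h1 h2]|[h1 h2]]; exists e; [right|left]. Qed.

Lemma adj_eqV (x x' y y' : sV L) : eqV x x' -> eqV y y' -> adj L x y -> adj L x' y'.
Proof.
move=> /eqV_sym hx /eqV_sym hy [e [[h1 h2]|[h1 h2]]]; exists e; [left|right];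
  by split; [apply: eqV_trans hx _ | apply: eqV_trans hy _].
Qed.

Lemma walk_rcons (x z : sV L) p :
  walk L x p -> adj L (last x p) z -> walk L x (rcons p z).
Proof.
elim: p x => [|y p IH] x /=; first by move=> _ h; split.
by case=> h1 h2 h3; split=> //; apply: IH.
Qed.

Lemma dist_le0 (x : sV L) : dist_le L x x 0.
Proof. by exists [::]. Qed.

Lemma dist_le_mono {x y : sV L} {r r'} : r <= r' -> dist_le L x y r -> dist_le L x y r'.
Proof. by move=> h [p [h1 h2]]; exists p; split=> //; apply: leq_trans h. Qed.

Lemma dist_le_eqV {x y y' : sV L} {r} : eqV y y' -> dist_le L x y r -> dist_le L x y' r.
Proof. by move=> h [p [h1 [h2 h3]]]; exists p; do 2!split=> //; apply: eqV_trans h. Qed.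

Lemma dist_le_adjr {x y z : sV L} {r} : dist_le L x y r -> adj L y z -> dist_le L x z r.+1.
Proof.
move=> [p [h1 [h2 h3]]] ha; exists (rcons p z); rewrite size_rcons last_rcons.
do 2!split=> //; apply: walk_rcons => //.
by apply: adj_eqV ha; [apply: eqV_sym | apply: eqV_refl].
Qed.

Lemma dist_le_adjl {x y z : sV L} {r} : adj L x y -> dist_le L y z r -> dist_le L x z r.+1.
Proof. by move=> ha [p [h1 [h2 h3]]]; exists (y :: p). Qed.
End EdgePaths.

Section DirectLimit.
Variables (L : nat -> cplx) (phi : forall n, morph (L n) (L n.+1)).

Lemma limit_eqV_equiv : equivalence _ (@eqV (limit L phi)).
Proof. exact: clos_rst_is_equiv. Qed.

Lemma limit_eqV_step n (x : cV (L n)) :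
  @eqV (limit L phi) (existT _ n x) (existT _ n.+1 (mV (phi n) x)).
Proof. by apply: rst_step; exists n, x. Qed.

Lemma limit_eqV_inv (P : sV (limit L phi) -> Prop) :
  (forall n x, P (existT _ n x) <-> P (existT _ n.+1 (mV (phi n) x))) ->
  forall p q, eqV p q -> (P p <-> P q).
Proof.
move=> hstep p q; elim=> {p q}.
- by move=> p q [n [x [-> ->]]].
- by [].
- by move=> p q _ h; split=> /h.
- by move=> p q r _ h1 _ h2; split=> [/h1/h2|/h2/h1].
Qed.
End DirectLimit.

Definition cellular {L L' : cplx} (p : morph L L') :=
  [/\ forall e, ends (mE p e) = (mV p (ends e).1, mV p (ends e).2),
      forall f i, bd (mF p f) i = mV p (bd f i),
      forall f i, fe (mF p f) i = mE p (fe f i) &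
      forall f i, fo (mF p f) i = fo f i].

Lemma cellular_omega (L L' : cplx) (p : morph L L') :
  cellular p -> cellular (omega_morph L L' p).
Proof.
case=> He Hb Hf Ho; split.
- by case=> [[[e []]|[f i]]|[f i]] /=; rewrite ?He ?Hf.
- by case=> f [i|] j //=; case: j => [[|[|[|[|?]]]] ?] /=; rewrite ?Hb ?Hf.
- by case=> f [i|] j //=; case: j => [[|[|[|[|?]]]] ?] /=; rewrite ?Hf ?Ho.
- by case=> f [i|] j //=; case: j => [[|[|[|[|?]]]] ?] /=; rewrite ?Ho.
Qed.

Lemma cellular_iota n : cellular (Defs.iota n).
Proof. by elim: n => [|n IH]; [split | apply: cellular_omega]. Qed.

Lemma nxt_prv (i : 'I_5) : nxt (prv i) = i.
Proof. by apply: val_inj; case: i => [[|[|[|[|[|?]]]]] ?]. Qed.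

Lemma prv_nxt (i : 'I_5) : prv (nxt i) = i.
Proof. by apply: val_inj; case: i => [[|[|[|[|[|?]]]]] ?]. Qed.

Lemma cyclic_offsets (i j : 'I_5) :
  j = i \/ j = nxt i \/ j = nxt (nxt i) \/ j = prv i \/ j = prv (prv i).
Proof.
case: i => [[|[|[|[|[|?]]]]] ?] //; case: j => [[|[|[|[|[|?]]]]] ?] //;
  by do ?[by left; apply: val_inj | right]; apply: val_inj.
Qed.

Definition boundary_coherent (L : cplx) := forall (f : cF L) i,
  ends (fe f i) = if fo f i then (bd f i, bd f (nxt i)) else (bd f (nxt i), bd f i).

Lemma boundary_coherent_omega L : boundary_coherent L -> boundary_coherent (omega L).
Proof.
move=> H [f [i|]] j //=; case: j => [[|[|[|[|[|?]]]]] ?] //=.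
- by rewrite (H f i); case: (fo f i).
- by rewrite nxt_prv.
- by rewrite (H f (prv i)) nxt_prv; case: (fo f (prv i)).
Qed.

Lemma boundary_coherent_Kn n : boundary_coherent (Kn n).
Proof. by elim: n => [|n IH]; [| apply: boundary_coherent_omega]. Qed.

Local Notation kv m w := (existT (fun n => cV (Kn n)) m w : sV K).
Local Notation wv m w := (existT (fun n => cV (omega (Kn n))) m w : sV omegaK).

Lemma K_eqV_equiv : equivalence _ (@eqV K).
Proof. exact: limit_eqV_equiv. Qed.

Lemma omegaK_eqV_equiv : equivalence _ (@eqV omegaK).
Proof. exact: limit_eqV_equiv. Qed.

Lemma adjK_ends {m} (e : cE (Kn m)) : adj K (kv m (ends e).1) (kv m (ends e).2).
Proof. by exists (existT _ m e); left; split; apply: rst_refl. Qed.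

Lemma adjK_nxt {m} (f : cF (Kn m)) j : adj K (kv m (bd f j)) (kv m (bd f (nxt j))).
Proof.
have := adjK_ends (fe f j); rewrite (boundary_coherent_Kn m f j).
by case: (fo f j) => //= /adj_sym.
Qed.

(* [cost i j] is the distance from c_i to v_j inside omega of a single pentagon. *)
Definition cost (i j : 'I_5) : nat := nth 0 [:: 2; 2; 3; 4; 3] ((j + 5 - i) %% 5).

Lemma cost_ge2 i j : 2 <= cost i j.
Proof. by case: i => [[|[|[|[|[|?]]]]] ?] //; case: j => [[|[|[|[|[|?]]]]] ?]. Qed.

Lemma cost_nxt i j : cost (nxt i) j <= (cost i j).+1 /\ cost i j <= (cost (nxt i) j).+1.
Proof. by case: i => [[|[|[|[|[|?]]]]] ?] //; case: j => [[|[|[|[|[|?]]]]] ?]. Qed.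

Lemma cost_offsets i : [/\ cost i i = 2, cost i (nxt i) = 2, cost i (nxt (nxt i)) = 3,
  cost i (prv i) = 3 & cost i (prv (prv i)) = 4].
Proof. by case: i => [[|[|[|[|[|?]]]]] ?]. Qed.

Section Reach.
Variable v : sV K.
Local Notation dK w r := (dist_le K v w r).

Lemma dK_adj {x y r} : dK x r -> adj K x y -> dK y r.+1.
Proof. exact: (dist_le_adjr K_eqV_equiv). Qed.

Lemma dK_nxt {m} {f : cF (Kn m)} {j r} : dK (kv m (bd f j)) r -> dK (kv m (bd f (nxt j))) r.+1.
Proof. by move/dK_adj; apply; apply: adjK_nxt. Qed.

Lemma dK_prv {m} {f : cF (Kn m)} {j r} : dK (kv m (bd f j)) r -> dK (kv m (bd f (prv j))) r.+1.
Proof. by move/dK_adj; apply; have := adjK_nxt f (prv j); rewrite nxt_prv => /adj_sym. Qed.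

Lemma dK_face {m} {f : cF (Kn m)} {j r} :
  dK (kv m (bd f j)) r -> forall i, dK (kv m (bd f i)) (r + 2).
Proof.
move=> h i; case: (cyclic_offsets j i) => [->|[->|[->|[->|->]]]].
- by apply: dist_le_mono h; lia.
- by apply: dist_le_mono (dK_nxt h); lia.
- by apply: dist_le_mono (dK_nxt (dK_nxt h)); lia.
- by apply: dist_le_mono (dK_prv h); lia.
- by apply: dist_le_mono (dK_prv (dK_prv h)); lia.
Qed.

Lemma dK_step n {w : cV (Kn n)} {r} :
  dK (kv n w) r <-> dK (kv n.+1 (mV (Defs.iota n) w)) r.
Proof.
have h := limit_eqV_step Kn Defs.iota n w.
by split; apply: (dist_le_eqV K_eqV_equiv); [| apply: rst_sym].
Qed.

Definition reach_at (k : nat) {m : nat} (x : oV (Kn m)) : Prop :=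
  match x with
  | inl (inl w) => exists r, 2 * r <= k /\ dK (kv m w) r
  | inl (inr e) => exists r, 2 * r + 1 <= k /\
       (dK (kv m (ends e).1) r \/ dK (kv m (ends e).2) r)
  | inr (f, i) => exists j r, 2 * r + cost i j <= k /\ dK (kv m (bd f j)) r
  end.

Lemma reach_old_mid k m (e : cE (Kn m)) w : w = (ends e).1 \/ w = (ends e).2 ->
  reach_at k (old _ w) -> reach_at k.+1 (mid _ e).
Proof. by move=> hw [r [hr h]]; exists r; split; [lia | case: hw => <-; tauto]. Qed.

Lemma reach_mid_old k m (e : cE (Kn m)) w : w = (ends e).1 \/ w = (ends e).2 ->
  reach_at k (mid _ e) -> reach_at k.+1 (old _ w).
Proof.
have he := adjK_ends e.
move=> hw [r [hr hends]]; case: hw hends => -> [h|h].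
- by exists r; split; [lia|].
- by exists r.+1; split; [lia | apply: dK_adj h (adj_sym he)].
- by exists r.+1; split; [lia | apply: dK_adj h he].
- by exists r; split; [lia|].
Qed.

Lemma reach_ring k m (f : cF (Kn m)) i :
  (reach_at k (cen _ f i) -> reach_at k.+1 (cen _ f (nxt i))) /\
  (reach_at k (cen _ f (nxt i)) -> reach_at k.+1 (cen _ f i)).
Proof.
by split=> -[j [r [hr h]]]; exists j, r; split=> //; have [] := cost_nxt i j; lia.
Qed.

Lemma reach_mid_fe {k m} {f : cF (Kn m)} {i r} : 2 * r + 1 <= k ->
  dK (kv m (bd f i)) r \/ dK (kv m (bd f (nxt i))) r -> reach_at k (mid _ (fe f i)).
Proof.
move=> hk h; exists r; split=> //.
by rewrite (boundary_coherent_Kn m f i); case: (fo f i) => /=; tauto.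
Qed.

Lemma reach_cen_mid k m (f : cF (Kn m)) i :
  reach_at k (cen _ f i) -> reach_at k.+1 (mid _ (fe f i)).
Proof.
move=> [j [r [hr h]]]; have [c0 c1 c2 c3 c4] := cost_offsets i.
case: (cyclic_offsets i j) hr h => [->|[->|[->|[->|->]]]] hr h.
- by apply: (reach_mid_fe (r := r)); [lia | left].
- by apply: (reach_mid_fe (r := r)); [lia | right].
- apply: (reach_mid_fe (r := r.+1)); [lia | right].
  by have := dK_prv h; rewrite prv_nxt.
- apply: (reach_mid_fe (r := r.+1)); [lia | left].
  by have := dK_nxt h; rewrite nxt_prv.
- apply: (reach_mid_fe (r := r.+2)); [lia | left].
  by have := dK_nxt (dK_nxt h); rewrite !nxt_prv.
Qed.

Lemma reach_mid_cen k m (f : cF (Kn m)) i :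
  reach_at k (mid _ (fe f i)) -> reach_at k.+1 (cen _ f i).
Proof.
move=> [r [hr hends]]; have [c0 c1 _ _ _] := cost_offsets i.
have [h|h] : dK (kv m (bd f i)) r \/ dK (kv m (bd f (nxt i))) r.
  by move: hends; rewrite (boundary_coherent_Kn m f i); case: (fo f i) => /=; tauto.
- by exists i, r; split; [lia|].
- by exists (nxt i), r; split; [lia|].
Qed.

Lemma reach_edge k m (x : oE (Kn m)) :
  (reach_at k (o_ends _ x).1 -> reach_at k.+1 (o_ends _ x).2) /\
  (reach_at k (o_ends _ x).2 -> reach_at k.+1 (o_ends _ x).1).
Proof.
case: x => [[[e []]|[f i]]|[f i]] /=.
- by split; [apply: reach_mid_old; right | apply: reach_old_mid; right].
- by split; [apply: reach_old_mid; left | apply: reach_mid_old; left].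
- exact: reach_ring.
- by split; [apply: reach_cen_mid | apply: reach_mid_cen].
Qed.

Lemma reach_at_step k n (x : oV (Kn n)) :
  reach_at k x <-> reach_at k (mV (omega_morph _ _ (Defs.iota n)) x).
Proof.
have [ends_iota bd_iota _ _] := cellular_iota n.
case: x => [[w|e]|[f i]] /=.
- by split=> -[r [hr h]]; exists r; split=> //; apply/(dK_step n).
- move: (ends_iota e) => /= ->.
  by split=> -[r [hr [h|h]]]; exists r; split=> //;
    [left|right|left|right]; apply/(dK_step n).
- move: (bd_iota f) => /= bd_iota_f.
  split=> -[j [r [hr h]]]; exists j, r; split=> //; rewrite ?bd_iota_f in h *;
    exact/(dK_step n).
Qed.

Definition reach (k : nat) (p : sV omegaK) : Prop := reach_at k (projT2 p).

Lemma reach_eqV k {p q : sV omegaK} : eqV p q -> (reach k p <-> reach k q).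
Proof. by apply: limit_eqV_inv => n x; apply: reach_at_step. Qed.

Lemma reach_adj {k} {x y : sV omegaK} : adj omegaK x y -> reach k x -> reach k.+1 y.
Proof.
case=> [[m e] [[hx hy]|[hx hy]]] /(reach_eqV _ hx) hr; apply/(reach_eqV _ hy).
- exact: (reach_edge k m e).1 hr.
- exact: (reach_edge k m e).2 hr.
Qed.

Lemma reach_walk {x : sV omegaK} {p k} :
  walk omegaK x p -> reach k x -> reach (k + size p) (last x p).
Proof.
elim: p x k => [|y p IH] x k /=; first by rewrite addn0.
by case=> ha hw hr; rewrite addnS -addSn; exact: IH hw (reach_adj ha hr).
Qed.

Lemma reach_mono {k k'} {p : sV omegaK} : k <= k' -> reach k p -> reach k' p.
Proof.
case: p => m [[w|e]|[f i]] /= hk.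
- by case=> r [hr h]; exists r; split=> //; lia.
- by case=> r [hr h]; exists r; split=> //; lia.
- by case=> j [r [hr h]]; exists j, r; split=> //; lia.
Qed.

Lemma reach_dist_le {x : sV omegaK} {k} : dist_le omegaK (omega_v v) x k -> reach k x.
Proof.
have reach_v : reach 0 (omega_v v).
  by exists 0; split=> //; rewrite {1}(sigT_eta v); apply: (dist_le0 K_eqV_equiv).
move=> [p [hs [hw he]]]; apply/(reach_eqV _ he).
exact: reach_mono hs (reach_walk hw reach_v).
Qed.

Lemma ball_omega_sub_omega_ball n g :
  ball (omega_v v) (2 * n - 2) g -> omega_faces (ball v n) g.
Proof.
case: g => m [f o] hb.
have [i0 hi0] : exists i0, dist_le omegaK (omega_v v) (wv m (cen _ f i0)) (2 * n - 2).
  case: o hb => [i|] hb; first by exists i; apply: (hb (Ordinal (isT : 2 < 5))).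
  by exists ord0; apply: hb.
have [j [r [hr h]]] := reach_dist_le hi0.
move=> i; apply: dist_le_mono (dK_face h i); have := cost_ge2 i0 j; lia.
Qed.
End Reach.

Lemma omega_v_eqV (x y : sV K) : eqV x y -> eqV (omega_v x) (omega_v y).
Proof.
elim=> {x y} [p q [n [x [-> ->]]] | x | x y _ | x y z _ hxy _ hyz].
- by apply: rst_step; exists n, (old _ x).
- exact: rst_refl.
- exact: rst_sym.
- exact: rst_trans hyz.
Qed.

Lemma adj_omega_v (x y : sV K) : adj K x y ->
  exists z, adj omegaK (omega_v x) z /\ adj omegaK z (omega_v y).
Proof.
case=> [[m e] [[hx hy]|[hx hy]]]; exists (wv m (mid _ e)); split.
- exists (existT _ m (Defs.half _ e false)); left.
  by split; [apply: omega_v_eqV hx | apply: rst_refl].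
- exists (existT _ m (Defs.half _ e true)); left.
  by split; [apply: rst_refl | apply: omega_v_eqV hy].
- exists (existT _ m (Defs.half _ e true)); right.
  by split; [apply: omega_v_eqV hx | apply: rst_refl].
- exists (existT _ m (Defs.half _ e false)); right.
  by split; [apply: rst_refl | apply: omega_v_eqV hy].
Qed.

Lemma walk_omega_v (x : sV K) p :
  walk K x p -> dist_le omegaK (omega_v x) (omega_v (last x p)) (2 * size p).
Proof.
elim: p x => [|y p IH] x /=; first by move=> _; apply: (dist_le0 omegaK_eqV_equiv).
case=> /adj_omega_v [z [hxz hzy]] /IH hy.
by rewrite mulnS; apply: dist_le_adjl hxz (dist_le_adjl hzy hy).
Qed.

Lemma dist_le_omega_v (x y : sV K) r :
  dist_le K x y r -> dist_le omegaK (omega_v x) (omega_v y) (2 * r).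
Proof.
case=> p [hs [/walk_omega_v hw /omega_v_eqV he]].
apply: dist_le_mono (_ : 2 * size p <= 2 * r) _; first lia.
exact: (dist_le_eqV omegaK_eqV_equiv) he hw.
Qed.

Lemma omega_ball_sub_ball_omega v n g :
  omega_faces (ball v n) g -> ball (omega_v v) (2 * n + 2) g.
Proof.
case: g => m [f o] hb.
have d_old i : dist_le omegaK (omega_v v) (wv m (old _ (bd f i))) (2 * n).
  exact: dist_le_omega_v (hb i).
have d_mid i : dist_le omegaK (omega_v v) (wv m (mid _ (fe f i))) (2 * n).+1.
  apply: (dist_le_adjr omegaK_eqV_equiv (d_old i)).
  exists (existT _ m (Defs.half _ (fe f i) (~~ fo f i))) => /=.
  by rewrite (boundary_coherent_Kn m f i); case: (fo f i) => /=; [left|right]; split;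
    apply: rst_refl.
have d_cen i : dist_le omegaK (omega_v v) (wv m (cen _ f i)) (2 * n).+2.
  apply: (dist_le_adjr omegaK_eqV_equiv (d_mid i)).
  by exists (existT _ m (spoke _ f i)); right; split; apply: rst_refl.
move=> j; apply: dist_le_mono (_ : (2 * n).+2 <= 2 * n + 2) _; first lia.
case: o hb => [i|] hb /=; last exact: d_cen.
case: j => [[|[|[|[|[|j]]]]] hj] /=; last by [].
- by apply: dist_le_mono (d_old i); lia.
- by apply: dist_le_mono (d_mid i); lia.
- exact: d_cen.
- exact: d_cen.
- by apply: dist_le_mono (d_mid (prv i)); lia.
Qed.

Lemma sub_incl_gen (L : scplx) (P R : sF L -> Prop) :
  (forall f, P f -> R f) -> sub_incl (gen P) (gen R).
Proof.
move=> PR; split; [|split].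
- by move=> x [f [i [pf e]]]; exists f, i; split=> //; apply: PR.
- by move=> x [f [i [pf e]]]; exists f, i; split=> //; apply: PR.
- by move=> x [f [pf e]]; exists f; split=> //; apply: PR.
Qed.

Theorem lemmal (v : sV K) (n : nat) :
  sub_incl (gen (ball (omega_v v) (2 * n - 2))) (gen (omega_faces (ball v n))) /\
  sub_incl (gen (omega_faces (ball v n))) (gen (ball (omega_v v) (2 * n + 2))).
Proof.
split; apply: sub_incl_gen.
- exact: ball_omega_sub_omega_ball.
- exact: omega_ball_sub_ball_omega.
Qed.
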